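(* In the setting below, if for some numbers $q_1,\dots,q_I$ one has $N_i^k/N^k\to q_i$ as $k\to\infty$ for every $1\le i\le I$, then $\nu_i^n/n\to q_i$ as $n\to\infty$ for every $1\le i\le I$. In particular, if the $N_i^k$ are random and $N_i^k/N^k\to q_i^*$ almost surely for all $i$, then $\nu_i^n/n\to q_i^*$ almost surely for all $i$.
   Context: Let $I\ge1$, let $0=N^0<N^1<N^2<\cdots$ be integers, and let $N_i^k$ ($1\le i\le I$, $k\ge0$) be nonnegative integers with $N_i^0=0$, $N_i^k\ge N_i^{k-1}$ and $\sum_{i=1}^IN_i^k=N^k$ for all $k$. For $k\ge1$ put $r_i^k=\frac{N_i^k-N_i^{k-1}}{N^k-N^{k-1}}$. Define integers $\nu_i^n$ ($n\ge0$) recursively: $\nu_i^0=0$ for all $i$; for $n\ge1$, with $k$ the unique integer such that $N^{k-1}<n\le N^k$, let $i_n$ be an index maximizing $r_i^k-\frac{\nu_i^{n-1}-N_i^{k-1}}{n-N^{k-1}}$ over $1\le i\le I$ (ties broken by choosing the largest $r_i^k$, and if still tied the largest $i$), and set $\nu_{i_n}^n=\nu_{i_n}^{n-1}+1$, $\nu_i^n=\nu_i^{n-1}$ for $i\ne i_n$. *)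

From Stdlib Require Import Reals Arith List.
Open Scope R_scope.

(* Indices i range over 0..I-1 (shift of the paper's 1..I).
   N k = N^k, Ni i k = N_i^k. *)

Fixpoint find_k (N : nat -> nat) (n fuel k : nat) : nat :=
  match fuel with
  | O => k
  | S f => if Nat.leb n (N k) then k else find_k N n f (S k)
  end.

(* For n >= 1 (and N 0 = 0, N strictly increasing) this is the unique k
   with N (k-1) < n <= N k. *)
Definition kof (N : nat -> nat) (n : nat) : nat := find_k N n (S n) 0.

Definition rik (N : nat -> nat) (Ni : nat -> nat -> nat) (i k : nat) : R :=
  (INR (Ni i k) - INR (Ni i (k - 1)%nat)) / (INR (N k) - INR (N (k - 1)%nat)).

(* the quantity maximized at step n, given nu^{n-1} = nuprev *)
Definition score (N : nat -> nat) (Ni : nat -> nat -> nat)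
  (nuprev : nat -> nat) (n k i : nat) : R :=
  rik N Ni i k - (INR (nuprev i) - INR (Ni i (k - 1)%nat)) / (INR n - INR (N (k - 1)%nat)).

(* j (processed after best, so j > best) beats best iff its score is larger,
   or equal score and larger r, or both equal (then j has larger index). *)
Definition beats (s r : nat -> R) (j best : nat) : bool :=
  if Rlt_dec (s best) (s j) then true
  else if Req_EM_T (s best) (s j) then
         (if Rlt_dec (r best) (r j) then true
          else if Req_EM_T (r best) (r j) then true else false)
       else false.

Fixpoint argmax (s r : nat -> R) (m : nat) : nat :=
  match m with
  | O => O
  | S m' => let b := argmax s r m' in if beats s r m b then m else b
  end.

Definition chosen (I : nat) (N : nat -> nat) (Ni : nat -> nat -> nat)
  (nuprev : nat -> nat) (n : nat) : nat :=
  let k := kof N n in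
  argmax (score N Ni nuprev n k) (fun i => rik N Ni i k) (I - 1).

Fixpoint nu (I : nat) (N : nat -> nat) (Ni : nat -> nat -> nat) (n : nat)
  : nat -> nat :=
  match n with
  | O => fun _ => O
  | S m =>
      let prev := nu I N Ni m in
      let j := chosen I N Ni prev (S m) in
      fun i => if Nat.eqb i j then S (prev i) else prev i
  end.

From Pilot Require Import Defs.
From Stdlib Require Import Reals Arith List Lra Lia.
Open Scope R_scope.

(* Split time into the blocks N^k < n <= N^(k+1).  Within block
   k+1 the target frequencies are r_i = r_i^(k+1), and we follow the deviation
     d_i(n) = nu_i^n - N_i^k - r_i (n - N^k).
   Assuming the block starts on target (nu_i^(N^k) = N_i^k), the scores at step n
   sum to 1 - t/(t+1) > 0 (t = n - 1 - N^k), so the chosen index has positive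
   score, i.e. d_j < 1 after incrementing it; all other d_i decrease.  Hence
   d_i < 1 throughout the block.  As the d_i sum to 0, also d_i > -I, so
   |d_i| <= I.  At the block's end d_i < 1 forces nu_i <= N_i^(k+1), and equal
   totals force equality, so every block indeed starts on target.  Finally a
   sequence staying within a bounded distance of the piecewise-linear
   interpolation of the N_i^k has the same limiting frequency. *)

Fixpoint rsum (f : nat -> R) (m : nat) : R :=
  match m with O => 0 | S m' => rsum f m' + f m' end.
Fixpoint nsum (f : nat -> nat) (m : nat) : nat :=
  match m with O => O | S m' => (nsum f m' + f m')%nat end.

Lemma fold_right_add_acc (l : list nat) (a : nat) :
  fold_right Nat.add a l = (a + fold_right Nat.add 0 l)%nat.
Proof. induction l; simpl; lia. Qed.

Lemma fold_right_seq_nsum (f : nat -> nat) (m : nat) :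
  fold_right Nat.add 0%nat (map f (seq 0 m)) = nsum f m.
Proof.
  induction m as [|m IH]; [reflexivity|].
  rewrite seq_S, map_app, fold_right_app; simpl.
  rewrite fold_right_add_acc, IH; lia.
Qed.

Lemma rsum_INR (f : nat -> nat) (m : nat) :
  rsum (fun i => INR (f i)) m = INR (nsum f m).
Proof. induction m as [|m IH]; simpl; [reflexivity|]. rewrite plus_INR, IH; reflexivity. Qed.

Lemma rsum_ext (f g : nat -> R) (m : nat) :
  (forall i, (i < m)%nat -> f i = g i) -> rsum f m = rsum g m.
Proof. induction m as [|m IH]; intros h; simpl; [reflexivity|]. rewrite IH, h; auto. Qed.

Lemma rsum_minus (f g : nat -> R) (m : nat) :
  rsum (fun i => f i - g i) m = rsum f m - rsum g m.
Proof. induction m as [|m IH]; simpl; [lra|]. rewrite IH; lra. Qed.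

Lemma rsum_mul_r (f : nat -> R) (c : R) (m : nat) :
  rsum (fun i => f i * c) m = rsum f m * c.
Proof. induction m as [|m IH]; simpl; [ring|]. rewrite IH; ring. Qed.

Lemma rsum_le (f g : nat -> R) (m : nat) :
  (forall i, (i < m)%nat -> f i <= g i) -> rsum f m <= rsum g m.
Proof.
  induction m as [|m IH]; intros h; simpl; [lra|].
  assert (rsum f m <= rsum g m) by auto. assert (f m <= g m) by auto. lra.
Qed.

Lemma rsum_const (c : R) (m : nat) : rsum (fun _ => c) m = INR m * c.
Proof. induction m as [|m IH]; simpl rsum; [simpl; ring|]. rewrite IH, S_INR; ring. Qed.

Lemma rsum_pos_max (f : nat -> R) (m j : nat) :
  (forall i, (i < m)%nat -> f i <= f j) -> 0 < rsum f m -> 0 < f j.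
Proof.
  intros hmax hpos. destruct (Rlt_le_dec 0 (f j)) as [|hj]; [assumption|].
  assert (rsum f m <= INR m * f j) by (rewrite <- rsum_const; apply rsum_le; auto).
  assert (0 <= INR m) by apply pos_INR. nra.
Qed.

Lemma rsum_le_one_terms (f : nat -> R) (m i : nat) :
  (forall j, (j < m)%nat -> f j <= 1) -> (i < m)%nat -> rsum f m <= f i + (INR m - 1).
Proof.
  induction m as [|m IH]; intros h hi; [lia|]. simpl rsum. rewrite S_INR.
  destruct (Nat.eq_dec i m) as [->|hne].
  - assert (rsum f m <= INR m * 1) by (rewrite <- rsum_const; apply rsum_le; auto). lra.
  - assert (rsum f m <= f i + (INR m - 1)) by (apply IH; auto; lia).
    assert (f m <= 1) by auto. lra.
Qed.

Lemma nsum_ext (f g : nat -> nat) (m : nat) :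
  (forall i, (i < m)%nat -> f i = g i) -> nsum f m = nsum g m.
Proof. induction m as [|m IH]; intros h; simpl; [reflexivity|]. rewrite IH, h; auto. Qed.

Lemma nsum_zero (m : nat) : nsum (fun _ => 0%nat) m = 0%nat.
Proof. induction m as [|m IH]; simpl; lia. Qed.

Lemma nsum_incr (g : nat -> nat) (j m : nat) : (j < m)%nat ->
  nsum (fun i => if Nat.eqb i j then S (g i) else g i) m = S (nsum g m).
Proof.
  induction m as [|m IH]; intros hj; [lia|]. simpl nsum.
  destruct (Nat.eq_dec j m) as [->|hne].
  - rewrite Nat.eqb_refl, (nsum_ext _ g); [lia|].
    intros i hi. destruct (Nat.eqb_spec i m); [lia|reflexivity].
  - rewrite IH by lia. destruct (Nat.eqb_spec m j); [lia|]. lia.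
Qed.

Lemma nsum_le (f g : nat -> nat) (m : nat) :
  (forall i, (i < m)%nat -> (f i <= g i)%nat) -> (nsum f m <= nsum g m)%nat.
Proof.
  induction m as [|m IH]; intros h; simpl; [lia|].
  assert (nsum f m <= nsum g m)%nat by auto. assert (f m <= g m)%nat by auto. lia.
Qed.

Lemma nsum_le_eq (f g : nat -> nat) (m : nat) :
  (forall i, (i < m)%nat -> (f i <= g i)%nat) -> nsum f m = nsum g m ->
  forall i, (i < m)%nat -> f i = g i.
Proof.
  induction m as [|m IH]; intros h e i hi; [lia|]. simpl in e.
  assert (nsum f m <= nsum g m)%nat by (apply nsum_le; auto).
  assert (f m <= g m)%nat by auto.
  destruct (Nat.eq_dec i m) as [->|hne]; [lia|]. apply IH; auto; lia.
Qed.

Lemma find_k_first (N : nat -> nat) (n k : nat) : forall fuel k0,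
  (forall j, (k0 <= j < k)%nat -> (N j < n)%nat) -> (n <= N k)%nat ->
  (k0 <= k <= k0 + fuel)%nat -> find_k N n fuel k0 = k.
Proof.
  induction fuel as [|fuel IH]; intros k0 hbefore hk hrange; simpl; [lia|].
  destruct (Nat.leb_spec n (N k0)) as [hle|hgt].
  - destruct (Nat.eq_dec k0 k) as [|hne]; [assumption|].
    assert (N k0 < n)%nat by (apply hbefore; lia). lia.
  - apply IH; [intros j hj; apply hbefore; lia | assumption |].
    destruct (Nat.eq_dec k0 k) as [->|]; lia.
Qed.

Section Breakpoints.

Variable N : nat -> nat.
Hypothesis N_succ : forall k, (N k < N (S k))%nat.

Lemma N_le (i j : nat) : (i <= j)%nat -> (N i <= N j)%nat.
Proof.
  induction j as [|j IH]; intros h; [replace i with 0%nat by lia; lia|].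
  destruct (Nat.eq_dec i (S j)) as [->|]; [lia|].
  specialize (N_succ j). specialize (IH ltac:(lia)). lia.
Qed.

Lemma N_ge_id (k : nat) : (k <= N k)%nat.
Proof. induction k as [|k IH]; [lia|]. specialize (N_succ k). lia. Qed.

Lemma kof_block (k n : nat) : (N k < n <= N (S k))%nat -> kof N n = S k.
Proof.
  intros hn. unfold kof. apply find_k_first; [| lia |].
  - intros j hj. assert (N j <= N k)%nat by (apply N_le; lia). lia.
  - assert (k <= N k)%nat by apply N_ge_id. lia.
Qed.

Hypothesis N_zero : N 0%nat = 0%nat.

Lemma block_of (n : nat) : (1 <= n)%nat -> exists k, (N k < n <= N (S k))%nat.
Proof.
  induction n as [|n IH]; intros hn; [lia|].
  destruct (Nat.eq_dec n 0) as [->|hn0].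
  - exists 0%nat. specialize (N_succ 0). lia.
  - destruct (IH ltac:(lia)) as [k hk].
    destruct (Nat.eq_dec n (N (S k))) as [->|].
    + exists (S k). specialize (N_succ (S k)). lia.
    + exists k. lia.
Qed.

End Breakpoints.

Lemma weighted_sum_lt (w1 w2 x1 x2 y1 y2 : R) :
  0 <= w1 -> 0 <= w2 -> 0 < w1 + w2 -> x1 < y1 -> x2 < y2 ->
  w1 * x1 + w2 * x2 < w1 * y1 + w2 * y2.
Proof.
  intros h1 h2 h12 hx1 hx2.
  destruct (Rle_lt_or_eq_dec 0 w1 h1) as [p1|<-]; [|nra].
  assert (w2 * x2 <= w2 * y2) by (apply Rmult_le_compat_l; lra). nra.
Qed.

Lemma interpolation_close (a a' b b' s c q e E : R) :
  0 < b -> b < b' -> b <= s <= b' ->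
  Rabs (a / b - q) < e -> Rabs (a' / b' - q) < e ->
  Rabs (c - a - (a' - a) / (b' - b) * (s - b)) <= E ->
  Rabs (c / s - q) < e + E / s.
Proof.
  intros hb hbb' hs ha ha' hc.
  set (L := a + (a' - a) / (b' - b) * (s - b)).
  assert (hu : - (e * b) < a - q * b < e * b).
  { replace (a - q * b) with ((a / b - q) * b) by (field; lra).
    apply Rabs_def2 in ha. split; nra. }
  assert (hu' : - (e * b') < a' - q * b' < e * b').
  { replace (a' - q * b') with ((a' / b' - q) * b') by (field; lra).
    apply Rabs_def2 in ha'. split; nra. }
  (* (L - q s) (b' - b) is a positive combination of a - q b and a' - q b',
     and the same combination of b and b' is s (b' - b) *)
  assert (hL : (L - q * s) * (b' - b) = (b' - s) * (a - q * b) + (s - b) * (a' - q * b')).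
  { unfold L. field. lra. }
  assert (hs' : e * s * (b' - b) = (b' - s) * (e * b) + (s - b) * (e * b')) by ring.
  assert (hLs : - (e * s) < L - q * s < e * s).
  { split; apply (Rmult_lt_reg_r (b' - b)); try lra.
    - rewrite hL. replace (- (e * s) * (b' - b)) with
        ((b' - s) * - (e * b) + (s - b) * - (e * b')) by ring.
      apply weighted_sum_lt; lra.
    - rewrite hL, hs'. apply weighted_sum_lt; lra. }
  assert (hLq : Rabs (L / s - q) < e).
  { replace (L / s - q) with ((L - q * s) * / s) by (field; lra).
    assert (0 < / s) by (apply Rinv_0_lt_compat; lra).
    replace e with (e * s * / s) by (field; lra). apply Rabs_def1; nra. }
  assert (hcL : Rabs ((c - L) / s) <= E / s).
  { replace (c - L) with (c - a - (a' - a) / (b' - b) * (s - b)) by (unfold L; ring).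
    unfold Rdiv. rewrite Rabs_mult, (Rabs_pos_eq (/ s)) by (left; apply Rinv_0_lt_compat; lra).
    apply Rmult_le_compat_r; [left; apply Rinv_0_lt_compat; lra | exact hc]. }
  replace (c / s - q) with ((c - L) / s + (L / s - q)) by (field; lra).
  eapply Rle_lt_trans; [apply Rabs_triang | lra].
Qed.

Lemma cv_of_tracking (N : nat -> nat) (a x : nat -> R) (q C : R) :
  N 0%nat = 0%nat -> (forall k, (N k < N (S k))%nat) ->
  Un_cv (fun k => a k / INR (N k)) q ->
  (forall k n, (N k <= n <= N (S k))%nat ->
     Rabs (x n - a k - (a (S k) - a k) / (INR (N (S k)) - INR (N k)) * (INR n - INR (N k)))
     <= C) ->
  Un_cv (fun n => x n / INR n) q.
Proof.
  intros hN0 hNinc ha htrack eps heps.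
  destruct (ha (eps / 2)) as [K hK]; [lra|].
  assert (hC : 0 <= C) by (eapply Rle_trans; [apply Rabs_pos | apply (htrack 0%nat 0%nat); lia]).
  destruct (archimed_cor1 (eps / (2 * (C + 1)))) as [M [hM hM0]].
  { apply Rdiv_lt_0_compat; lra. }
  exists (max (S (N (S K))) M). intros n hn.
  destruct (block_of N hNinc hN0 n ltac:(lia)) as [k hk].
  assert (hKk : (S K <= k)%nat).
  { destruct (le_lt_dec (S K) k) as [|hlt]; [assumption|].
    assert (N (S k) <= N (S K))%nat by (apply N_le; auto; lia). lia. }
  assert (hb : 0 < INR (N k)).
  { apply lt_0_INR. assert (N 0 < N 1)%nat by apply hNinc.
    assert (N 1 <= N k)%nat by (apply N_le; auto; lia). lia. }
  assert (hbb' : INR (N k) < INR (N (S k))) by (apply lt_INR; auto).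
  assert (hs : INR (N k) <= INR n <= INR (N (S k))) by (split; apply le_INR; lia).
  assert (hclose := interpolation_close (a k) (a (S k)) _ _ _ (x n) q (eps / 2) C
    hb hbb' hs (hK k ltac:(lia)) (hK (S k) ltac:(lia)) (htrack k n ltac:(lia))).
  assert (hCn : C / INR n < eps / 2).
  { assert (0 < INR M) by (apply lt_0_INR; lia).
    assert (/ INR n <= / INR M) by (apply Rinv_le_contravar; [lra | apply le_INR; lia]).
    assert (0 < / INR n) by (apply Rinv_0_lt_compat; lra).
    assert ((C + 1) * / INR M < eps / 2).
    { replace (eps / 2) with ((C + 1) * (eps / (2 * (C + 1)))) by (field; lra).
      apply Rmult_lt_compat_l; lra. }
    unfold Rdiv at 1. nra. }
  unfold R_dist. lra.
Qed.

(* [argmax s r m] is an index in 0..m maximizing s (the tie-breaking by r is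
   irrelevant for the argument). *)
Lemma argmax_spec (s r : nat -> R) (m : nat) :
  (argmax s r m <= m)%nat /\ forall j, (j <= m)%nat -> s j <= s (argmax s r m).
Proof.
  induction m as [|m [hle hmax]]; simpl.
  - split; [lia|]. intros j hj. replace j with 0%nat by lia. lra.
  - set (b := argmax s r m) in *.
    assert (hall : forall j, (j <= m)%nat -> s j <= s b) by exact hmax.
    unfold beats.
    destruct (Rlt_dec (s b) (s (S m))) as [hlt|hnlt].
    { split; [lia|]. intros j hj. destruct (Nat.eq_dec j (S m)) as [->|]; [lra|].
      assert (s j <= s b) by (apply hall; lia). lra. }
    assert (hb : forall j, (j <= S m)%nat -> s j <= s b).
    { intros j hj. destruct (Nat.eq_dec j (S m)) as [->|]; [lra | apply hall; lia]. }
    destruct (Req_EM_T (s b) (s (S m))) as [heq|hneq];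
      [destruct (Rlt_dec (r b) (r (S m))); [|destruct (Req_EM_T (r b) (r (S m)))]|];
      (split; [lia|]); intros j hj; try rewrite <- heq; apply hb; lia.
Qed.

Lemma chosen_spec (I : nat) (N : nat -> nat) (Ni : nat -> nat -> nat)
  (prev : nat -> nat) (n : nat) : (1 <= I)%nat ->
  (chosen I N Ni prev n < I)%nat /\
  forall i, (i < I)%nat ->
    score N Ni prev n (kof N n) i <= score N Ni prev n (kof N n) (chosen I N Ni prev n).
Proof.
  intros hI. unfold chosen.
  destruct (argmax_spec (score N Ni prev n (kof N n)) (fun i => rik N Ni i (kof N n)) (I - 1))
    as [hle hmax].
  split; [lia|]. intros i hi. apply hmax. lia.
Qed.

Section Allocation.

Variables (I : nat) (N : nat -> nat) (Ni : nat -> nat -> nat).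
Hypothesis hI : (1 <= I)%nat.
Hypothesis hN0 : N 0%nat = 0%nat.
Hypothesis hNinc : forall k, (N k < N (S k))%nat.
Hypothesis hNi0 : forall i, (i < I)%nat -> Ni i 0%nat = 0%nat.
Hypothesis hNimon : forall i k, (i < I)%nat -> (Ni i k <= Ni i (S k))%nat.
Hypothesis hsum : forall k, fold_right Nat.add 0%nat (map (fun i => Ni i k) (seq 0 I)) = N k.

Local Notation nu := (nu I N Ni).
Local Notation rik := (rik N Ni).

Lemma nu_succ (n i : nat) :
  nu (S n) i = if Nat.eqb i (chosen I N Ni (nu n) (S n)) then S (nu n i) else nu n i.
Proof. reflexivity. Qed.

Lemma nu_total (n : nat) : nsum (nu n) I = n.
Proof.
  induction n as [|n IH].
  - apply nsum_zero.
  - destruct (chosen_spec I N Ni (nu n) (S n) hI) as [hj _].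
    rewrite (nsum_ext _ (fun i => if Nat.eqb i (chosen I N Ni (nu n) (S n))
                                  then S (nu n i) else nu n i)) by (intros; apply nu_succ).
    rewrite nsum_incr by assumption. lia.
Qed.

Lemma Ni_total (k : nat) : nsum (fun i => Ni i k) I = N k.
Proof. rewrite <- fold_right_seq_nsum. apply hsum. Qed.

Lemma rik_succ (i k : nat) :
  rik i (S k) = (INR (Ni i (S k)) - INR (Ni i k)) / (INR (N (S k)) - INR (N k)).
Proof. unfold Defs.rik. rewrite Nat.sub_succ, Nat.sub_0_r. reflexivity. Qed.

Lemma block_length_pos (k : nat) : 0 < INR (N (S k)) - INR (N k).
Proof. assert (INR (N k) < INR (N (S k))) by (apply lt_INR; auto). lra. Qed.

Lemma rik_sum (k : nat) : rsum (fun i => rik i (S k)) I = 1.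
Proof.
  rewrite (rsum_ext _ (fun i => (INR (Ni i (S k)) - INR (Ni i k)) * / (INR (N (S k)) - INR (N k))))
    by (intros; apply rik_succ).
  rewrite rsum_mul_r, rsum_minus, !rsum_INR, !Ni_total.
  assert (h := block_length_pos k). field. lra.
Qed.

Lemma rik_nonneg (i k : nat) : (i < I)%nat -> 0 <= rik i (S k).
Proof.
  intros hi. rewrite rik_succ. apply Rmult_le_pos.
  - assert (INR (Ni i k) <= INR (Ni i (S k))) by (apply le_INR; auto). lra.
  - left. apply Rinv_0_lt_compat, block_length_pos.
Qed.

Lemma rik_block (i k : nat) :
  rik i (S k) * INR (N (S k) - N k) = INR (Ni i (S k)) - INR (Ni i k).
Proof.
  rewrite rik_succ, minus_INR by (apply Nat.lt_le_incl, hNinc).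
  assert (h := block_length_pos k). field. lra.
Qed.

Lemma excess_sum (k t : nat) :
  rsum (fun i => INR (nu (N k + t) i) - INR (Ni i k)) I = INR t.
Proof. rewrite rsum_minus, !rsum_INR, nu_total, Ni_total, plus_INR. ring. Qed.

Lemma score_in_block (k t : nat) (prev : nat -> nat) (i : nat) :
  (t < N (S k) - N k)%nat ->
  score N Ni prev (S (N k + t)) (kof N (S (N k + t))) i
  = rik i (S k) - (INR (prev i) - INR (Ni i k)) / (INR t + 1).
Proof.
  intros ht. rewrite (kof_block N hNinc k) by lia.
  unfold score. rewrite Nat.sub_succ, Nat.sub_0_r, S_INR, plus_INR.
  replace (INR (N k) + INR t + 1 - INR (N k)) with (INR t + 1) by ring. reflexivity.
Qed.

(* If block k+1 starts on target, the index chosen at each of its steps has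
   positive score: the scores sum to 1 - t / (t + 1). *)
Lemma chosen_score_pos (k t : nat) :
  (forall i, (i < I)%nat -> nu (N k) i = Ni i k) -> (t < N (S k) - N k)%nat ->
  0 < score N Ni (nu (N k + t)) (S (N k + t)) (kof N (S (N k + t)))
        (chosen I N Ni (nu (N k + t)) (S (N k + t))).
Proof.
  intros hstart ht.
  destruct (chosen_spec I N Ni (nu (N k + t)) (S (N k + t)) hI) as [_ hmax].
  apply (rsum_pos_max _ I); [exact hmax|].
  rewrite (rsum_ext _ (fun i => rik i (S k) - (INR (nu (N k + t) i) - INR (Ni i k)) * / (INR t + 1)))
    by (intros; apply score_in_block; assumption).
  rewrite rsum_minus, rsum_mul_r, rik_sum, excess_sum.
  assert (0 <= INR t) by apply pos_INR.
  replace (1 - INR t * / (INR t + 1)) with (/ (INR t + 1)) by (field; lra).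
  apply Rinv_0_lt_compat. lra.
Qed.

Lemma block_deviation_lt1 (k : nat) :
  (forall i, (i < I)%nat -> nu (N k) i = Ni i k) ->
  forall t, (t <= N (S k) - N k)%nat -> forall i, (i < I)%nat ->
  INR (nu (N k + t) i) - INR (Ni i k) < rik i (S k) * INR t + 1.
Proof.
  intros hstart t. induction t as [|t IH]; intros ht i hi.
  - rewrite Nat.add_0_r, hstart by assumption. simpl. lra.
  - assert (hpos := chosen_score_pos k t hstart ltac:(lia)).
    rewrite score_in_block in hpos by lia.
    rewrite Nat.add_succ_r, nu_succ, !S_INR.
    set (j := chosen I N Ni (nu (N k + t)) (S (N k + t))) in *.
    assert (0 <= INR t) by apply pos_INR.
    destruct (Nat.eqb_spec i j) as [->|hij].
    + (* positive score: the excess of j is below r_j (t + 1) *)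
      set (d := INR (nu (N k + t) j) - INR (Ni j k)) in *.
      assert (hd : d = d / (INR t + 1) * (INR t + 1)) by (field; lra).
      assert (d < rik j (S k) * (INR t + 1)) by nra.
      rewrite S_INR. unfold d in *. lra.
    + assert (0 <= rik i (S k)) by (apply rik_nonneg; assumption).
      specialize (IH ltac:(lia) i hi). lra.
Qed.

Lemma nu_at_breakpoints (k : nat) : forall i, (i < I)%nat -> nu (N k) i = Ni i k.
Proof.
  induction k as [|k IH]; intros i hi.
  - rewrite hN0, hNi0 by assumption. reflexivity.
  - (* at the end of the block the deviations are < 1, hence nu <= N^(k+1) *)
    assert (hend : (N k + (N (S k) - N k))%nat = N (S k)) by (specialize (hNinc k); lia).
    assert (hle : forall j, (j < I)%nat -> (nu (N (S k)) j <= Ni j (S k))%nat).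
    { intros j hj. assert (h := block_deviation_lt1 k IH _ (le_n _) j hj).
      rewrite hend, rik_block in h.
      apply Nat.lt_succ_r, INR_lt. rewrite S_INR. lra. }
    apply (nsum_le_eq _ (fun j => Ni j (S k)) I hle); [|assumption].
    rewrite nu_total, Ni_total. reflexivity.
Qed.

(* Inside block k+1 every deviation is bounded by I in absolute value: it is
   below 1 and the deviations sum to 0. *)
Lemma deviation_bound (k n i : nat) : (N k <= n <= N (S k))%nat -> (i < I)%nat ->
  Rabs (INR (nu n i) - INR (Ni i k) - rik i (S k) * (INR n - INR (N k))) <= INR I.
Proof.
  intros hn hi.
  set (t := (n - N k)%nat).
  assert (hnt : n = (N k + t)%nat) by (unfold t; lia).
  replace (INR n - INR (N k)) with (INR t) by (rewrite hnt, plus_INR; ring).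
  rewrite hnt.
  set (dev := fun j => INR (nu (N k + t) j) - INR (Ni j k) - rik j (S k) * INR t).
  assert (hlt1 : forall j, (j < I)%nat -> dev j <= 1).
  { intros j hj. left. unfold dev.
    assert (h := block_deviation_lt1 k (nu_at_breakpoints k) t ltac:(lia) j hj). lra. }
  assert (hsum0 : rsum dev I = 0).
  { unfold dev. rewrite rsum_minus, excess_sum, rsum_mul_r, rik_sum. ring. }
  assert (hlow := rsum_le_one_terms dev I i hlt1 hi).
  assert (1 <= INR I) by (apply (le_INR 1); assumption).
  specialize (hlt1 i hi). fold (dev i). apply Rabs_le. lra.
Qed.

End Allocation.

Theorem lemma2p6 (I : nat) (N : nat -> nat) (Ni : nat -> nat -> nat)
  (q : nat -> R)
  (hI : (1 <= I)%nat)
  (hN0 : N 0%nat = 0%nat)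
  (hNinc : forall k, (N k < N (S k))%nat)
  (hNi0 : forall i, (i < I)%nat -> Ni i 0%nat = 0%nat)
  (hNimon : forall i k, (i < I)%nat -> (Ni i k <= Ni i (S k))%nat)
  (hsum : forall k, fold_right Nat.add 0%nat (map (fun i => Ni i k) (seq 0 I)) = N k)
  (hlim : forall i, (i < I)%nat -> Un_cv (fun k => INR (Ni i k) / INR (N k)) (q i)) :
  forall i, (i < I)%nat -> Un_cv (fun n => INR (nu I N Ni n i) / INR n) (q i).
Proof.
  intros i hi.
  apply (cv_of_tracking N (fun k => INR (Ni i k)) (fun n => INR (nu I N Ni n i)) (q i) (INR I));
    [assumption | assumption | apply hlim; assumption |].
  intros k n hn. rewrite <- rik_succ.
  apply deviation_bound; assumption.
Qed.
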